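(* Let $a>0$, $B_u>0$, $B_v<0$, $\Delta x\in(0,1]$, $\varepsilon>0$, and let $\alpha<(3+2\sqrt2)B_v^{-1}$. Assume $2aB_v+\tfrac{\Delta x}{\varepsilon}B_u>0$. Then $$-\frac{aB_u^2}{B_v}\alpha+\frac{B_u}{B_v}\frac{\Delta x}{2\varepsilon}<-a(1-B_v\alpha)-\sqrt{-2a\bigl(2aB_v+\tfrac{\Delta x}{\varepsilon}B_u\bigr)\alpha}.$$ *)

From Stdlib Require Import Reals.

(* Only the sign of alpha matters: the threshold (3 + 2 sqrt 2) / B_v is
   negative, so alpha < 0.  The radicand is then the product of the
   nonnegative numbers u = 2 a B_v alpha and v = -(2 a B_v + c) / B_v, where
   c = (dx / eps) B_u, and AM-GM (sqrt (u v) <= (u + v) / 2) bounds the right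
   side from below by c / (2 B_v).  The left side is c / (2 B_v) minus the
   positive quantity a B_u^2 alpha / B_v. *)
From Stdlib Require Import Reals Psatz.
Open Scope R_scope.

Lemma sqrt_mult_le_mean (x y : R) :
  0 <= x -> 0 <= y -> sqrt (x * y) <= (x + y) / 2.
Proof.
  intros hx hy.
  rewrite sqrt_mult by assumption.
  pose proof (sqrt_sqrt x hx); pose proof (sqrt_sqrt y hy).
  pose proof (pow2_ge_0 (sqrt x - sqrt y)).
  nra.
Qed.

Lemma half_ratio_le_sub_sqrt (a Bv c alpha : R) :
  0 <= a -> Bv < 0 -> alpha <= 0 -> 0 <= 2 * a * Bv + c ->
  c / (2 * Bv) <= - a * (1 - Bv * alpha) - sqrt (- 2 * a * (2 * a * Bv + c) * alpha).
Proof.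
  intros ha hBv halpha hpos.
  set (u := 2 * a * Bv * alpha).
  set (v := - (2 * a * Bv + c) / Bv).
  assert (hu : 0 <= u).
  { assert (0 <= Bv * alpha) by nra.
    unfold u; rewrite Rmult_assoc; nra. }
  assert (hv : 0 <= v).
  { assert (v * Bv = - (2 * a * Bv + c)) by (unfold v; field; lra).
    nra. }
  replace (- 2 * a * (2 * a * Bv + c) * alpha) with (u * v)
    by (unfold u, v; field; lra).
  pose proof (sqrt_mult_le_mean u v hu hv).
  replace (c / (2 * Bv)) with (- a + u / 2 - (u + v) / 2)
    by (unfold u, v; field; lra).
  unfold u in *; lra.
Qed.

Lemma lt_0_of_lt_pos_div_neg (alpha k Bv : R) :
  0 < k -> Bv < 0 -> alpha < k / Bv -> alpha < 0.
Proof.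
  intros hk hBv halpha.
  assert (k / Bv < 0) by (apply Rdiv_pos_neg; assumption).
  lra.
Qed.

Theorem lemma4 (a Bu Bv dx eps alpha : R)
  (ha : 0 < a) (hBu : 0 < Bu) (hBv : Bv < 0)
  (hdx0 : 0 < dx) (hdx1 : dx <= 1) (heps : 0 < eps)
  (halpha : alpha < (3 + 2 * sqrt 2) / Bv)
  (hpos : 2 * a * Bv + dx / eps * Bu > 0) :
  - (a * Bu ^ 2 / Bv) * alpha + Bu / Bv * (dx / (2 * eps))
  < - a * (1 - Bv * alpha)
    - sqrt (- 2 * a * (2 * a * Bv + dx / eps * Bu) * alpha).
Proof.
  assert (halpha0 : alpha < 0).
  { apply (lt_0_of_lt_pos_div_neg alpha (3 + 2 * sqrt 2) Bv); try assumption.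
    pose proof (sqrt_pos 2); lra. }
  pose proof (half_ratio_le_sub_sqrt a Bv (dx / eps * Bu) alpha
                ltac:(lra) hBv ltac:(lra) ltac:(lra)) as hbound.
  assert (hshift : 0 < a * Bu ^ 2 / Bv * alpha).
  { replace (a * Bu ^ 2 / Bv * alpha) with (a * Bu ^ 2 * (alpha / Bv))
      by (field; lra).
    apply Rmult_lt_0_compat.
    - apply Rmult_lt_0_compat; [exact ha | apply pow_lt; exact hBu].
    - exact (Rdiv_neg_neg alpha Bv halpha0 hBv). }
  replace (Bu / Bv * (dx / (2 * eps))) with (dx / eps * Bu / (2 * Bv))
    by (field; lra).
  lra.
Qed.
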